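(* The restriction of the projection $\pi:R\to R(F,H)$, $u\mapsto u^\eta$, to the center $Z(R)$ is an algebra isomorphism of $Z(R)$ onto its image $W(F,H)=\pi(Z(R))\subseteq R(F,H)$.
   Context: Let $f\in\mathbb{C}[H]$ be a polynomial. $R=R(f)$ is the associative $\mathbb{C}$-algebra generated by $E,F,H$ with relations $EF-FE=f(H)$, $HE-EH=E$, $HF-FH=-F$; the monomials $F^iH^jE^k$ form a basis of $R$. Let $R(E)=\mathbb{C}[E]$ and $R(F,H)$ the subalgebra generated by $F,H$ (with basis $F^iH^j$). Let $u\in\mathbb{C}[H]$ satisfy $f(H)=\tfrac12(u(H+1)-u(H))$ and $\Omega=2FE+u(H+1)$; the center $Z(R)$ is the polynomial ring $\mathbb{C}[\Omega]$. Fix an algebra homomorphism $\eta:R(E)\to\mathbb{C}$ with $\eta(E)\neq0$ and let $R_\eta(E)=\ker\eta$. Then $R=R(F,H)\oplus R\,R_\eta(E)$ as vector spaces; for $u\in R$, $u^\eta=\pi(u)$ denotes its $R(F,H)$-component. *)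

From HB Require Import structures.
From mathcomp Require Import all_boot all_order all_algebra.
From mathcomp Require Import complex.
From mathcomp Require Import Rstruct.
From Stdlib Require Import ClassicalEpsilon.
From Stdlib Require Rdefinitions.

Set Implicit Arguments.
Unset Strict Implicit.
Unset Printing Implicit Defensive.

Import GRing.Theory.
Local Open Scope ring_scope.

Notation C := (complex Rdefinitions.R).

Section Defs.
Variable A : algType C.
Variables E F H : A.

Definition peval (p : {poly C}) (a : A) : A :=
  \sum_(i < size p) p`_i *: a ^+ i.

Definition fH (f : {poly C}) : A := peval f H.

Definition Rf_relations (f : {poly C}) : Prop :=
  [/\ E * F - F * E = fH f, H * E - E * H = E & H * F - F * H = - F].

Definition mono (i j k : nat) : A := F ^+ i * H ^+ j * E ^+ k.

Definition PBW_basis : Prop :=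
  (forall x : A, exists (n : nat) (c : 'I_n -> 'I_n -> 'I_n -> C),
      x = \sum_(i < n) \sum_(j < n) \sum_(k < n) c i j k *: mono i j k)
  /\
  (forall (n : nat) (c : 'I_n -> 'I_n -> 'I_n -> C),
      \sum_(i < n) \sum_(j < n) \sum_(k < n) c i j k *: mono i j k = 0 ->
      forall i j k, c i j k = 0).

(* R(F,H): the subalgebra generated by F and H, i.e. the intersection of all
   subalgebras (sets containing 1, closed under +, *, scaling) containing F,H *)
Definition subalg_closed (S : A -> Prop) : Prop :=
  [/\ S 1, forall x y, S x -> S y -> S (x + y),
      forall x y, S x -> S y -> S (x * y) & forall (a : C) x, S x -> S (a *: x)].

Definition RFH (x : A) : Prop :=
  forall S : A -> Prop, subalg_closed S -> S F -> S H -> S x.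

(* R(E) = C[E] = { p(E) }.  The character eta : R(E) -> C with eta(E) = c is
   eta(p(E)) = p(c); its kernel R_eta(E) = { p(E) | p(c) = 0 }. *)
Definition RE_eta (c : C) (x : A) : Prop :=
  exists p : {poly C}, x = peval p E /\ p.[c] = 0.

(* R R_eta(E): the left ideal generated, i.e. finite sums of products r * y
   with r in R and y in R_eta(E). *)
Definition R_RE_eta (c : C) (x : A) : Prop :=
  exists (n : nat) (r y : 'I_n -> A),
    (forall i, RE_eta c (y i)) /\ x = \sum_(i < n) r i * y i.

(* u^eta: the R(F,H)-component of u in R = R(F,H) (+) R R_eta(E). *)
Definition proj_eta (c : C) (u : A) : A :=
  epsilon (inhabits 0) (fun v => RFH v /\ R_RE_eta c (u - v)).

Definition central (z : A) : Prop := forall x : A, z * x = x * z.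

End Defs.

From Pilot Require Import Defs.
From HB Require Import structures.
From mathcomp Require Import all_boot all_order all_algebra.
From mathcomp Require Import complex.
From mathcomp Require Import Rstruct.
From mathcomp Require Import zify.
From Stdlib Require Rdefinitions.
From Stdlib Require Import ClassicalEpsilon.

Set Implicit Arguments.
Unset Strict Implicit.
Unset Printing Implicit Defensive.

Import GRing.Theory Num.Theory.
Local Open Scope ring_scope.

(* The PBW identity F^i H^j E^k = c^k F^i H^j + F^i H^j (E^k - c^k) gives
   R = R(F,H) + R (E - c), and the left ideal R (E - c) is exactly R R_eta(E).
   The sum is direct: writing w = sum F^i H^j p_ij(E), the (i,j)-slice of
   w (E - c) is p_ij(X) (X - c), which is never a nonzero constant.  So u^eta
   is the projection along R (E - c); it is linear, and multiplicative on the
   centre because z w - z^eta w^eta = w (z - z^eta) + z^eta (w - w^eta).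
   A central z in R (E - c) commutes with H, and ad H scales F^i H^j E^k by
   k - i, so each slice p_ij(X) (X - c) is a monomial a X^i; evaluating at
   X = c <> 0 gives a = 0. *)

Lemma mulXsubC_eq_monomial_eq0 (R : idomainType) (p : {poly R}) (c a : R) d :
  c ^+ d != 0 -> p * ('X - c%:P) = a *: 'X^d -> p = 0.
Proof.
move=> cd_neq0 pXc.
have a0 : a = 0.
  have := congr1 (horner^~ c) pXc.
  rewrite hornerM hornerXsubC subrr mulr0 hornerZ hornerXn => /esym/eqP.
  by rewrite mulf_eq0 (negbTE cd_neq0) orbF => /eqP.
by move: pXc; rewrite a0 scale0r => /eqP; rewrite mulf_eq0 polyXsubC_eq0 orbF => /eqP.
Qed.

Lemma big_nat_widen0 (V : nmodType) (G : nat -> V) n m :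
  (n <= m)%N -> (forall i, (n <= i)%N -> G i = 0) ->
  \sum_(0 <= i < m) G i = \sum_(0 <= i < n) G i.
Proof.
move=> le_nm G0; rewrite (big_cat_nat (leq0n n) le_nm) /= [X in _ + X]big1_seq ?addr0 //.
by move=> i /andP[_]; rewrite mem_index_iota => /andP[/G0].
Qed.

Section LeftIdeal.
Variables (K : comNzRingType) (A : algType K).
Implicit Types (a r x y : A) (k : K).

Definition lideal a x := exists w, x = w * a.

Lemma lideal0 a : lideal a 0.
Proof. by exists 0; rewrite mul0r. Qed.

Lemma lidealD a x y : lideal a x -> lideal a y -> lideal a (x + y).
Proof. by move=> [u ->] [w ->]; exists (u + w); rewrite mulrDl. Qed.

Lemma lidealMl a r x : lideal a x -> lideal a (r * x).
Proof. by move=> [w ->]; exists (r * w); rewrite mulrA. Qed.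

Lemma lidealZ a k x : lideal a x -> lideal a (k *: x).
Proof. by rewrite -mulr_algl; apply: lidealMl. Qed.

Lemma lidealB a x y : lideal a x -> lideal a y -> lideal a (x - y).
Proof. by move=> ax ay; apply: lidealD => //; rewrite -mulN1r; apply: lidealMl. Qed.

Lemma lideal_sum a (I : Type) (s : seq I) (G : I -> A) :
  (forall i, lideal a (G i)) -> lideal a (\sum_(i <- s) G i).
Proof. by move=> aG; apply: big_ind => //; [apply: lideal0 | apply: lidealD]. Qed.

Lemma lideal_expr_sub x k n : lideal (x - k%:A) (x ^+ n - (k ^+ n)%:A).
Proof.
elim: n => [|n [w IHn]]; first by rewrite !expr0 scale1r subrr; apply: lideal0.
exists (x * w + (k ^+ n)%:A).
rewrite mulrDl -mulrA -IHn !mulrBr -exprS mulr_algr mulr_algl mulr_algl scalerA -exprSr.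
by rewrite addrA subrK.
Qed.

End LeftIdeal.

Lemma lideal_peval_sub (A : algType C) (x : A) (c : C) (p : {poly C}) :
  lideal (x - c%:A) (peval p x - (p.[c])%:A).
Proof.
have -> : peval p x - (p.[c])%:A = \sum_(i < size p) p`_i *: (x ^+ i - (c ^+ i)%:A).
  rewrite horner_coef scaler_suml -sumrB; apply: eq_bigr => i _.
  by rewrite scalerBr scalerA.
by apply: lideal_sum => i; apply: lidealZ; apply: lideal_expr_sub.
Qed.

Lemma peval_XsubC (A : algType C) (x : A) (c : C) : peval ('X - c%:P) x = x - c%:A.
Proof.
rewrite /peval size_XsubC !big_ord_recl big_ord0 /= !coefB !coefX !coefC /=.
by rewrite expr0 expr1 sub0r subr0 scale1r addr0 scaleNr addrC.
Qed.

Lemma R_RE_etaE (A : algType C) (E : A) (c : C) x :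
  R_RE_eta E c x <-> lideal (E - c%:A) x.
Proof.
split; last first.
  case=> w ->; exists 1%N, (fun _ => w), (fun _ => E - c%:A); split; last by rewrite big_ord1.
  by move=> _; exists ('X - c%:P); rewrite peval_XsubC hornerXsubC subrr.
case=> n [r [y [ker_y ->]]].
apply: lideal_sum => i; apply: lidealMl.
have [p [-> pc0]] := ker_y i.
by have := lideal_peval_sub E c p; rewrite pc0 scale0r subr0.
Qed.

Section AdWeights.
Variables (K : comNzRingType) (A : algType K).
Implicit Types (h x y : A) (a b : K).

Lemma ad_weightM h x y a b :
  h * x - x * h = a *: x -> h * y - y * h = b *: y ->
  h * (x * y) - x * y * h = (a + b) *: (x * y).
Proof.
move=> hx hy.
have -> : h * (x * y) - x * y * h = (h * x - x * h) * y + x * (h * y - y * h).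
  by rewrite mulrBl mulrBr !mulrA addrA subrK.
by rewrite hx hy -scalerAl -scalerAr scalerDl.
Qed.

Lemma ad_weightX h x a n :
  h * x - x * h = a *: x -> h * x ^+ n - x ^+ n * h = (a *+ n) *: x ^+ n.
Proof.
move=> hx; elim: n => [|n IHn]; first by rewrite !expr0 mul1r mulr1 subrr mulr0n scale0r.
by rewrite exprSr (ad_weightM IHn hx) mulrSr.
Qed.

End AdWeights.

Section FHSpan.
Variables (A : algType C) (F H : A).
Hypothesis HF : H * F - F * H = - F.
Implicit Types x y : A.

Definition FH_span x := exists s : seq (nat * nat * C),
  x = \sum_(t <- s) t.2 *: (F ^+ t.1.1 * H ^+ t.1.2).

Lemma FH_span0 : FH_span 0.
Proof. by exists [::]; rewrite big_nil. Qed.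

Lemma FH_span_lin (a : C) x y : FH_span x -> FH_span y -> FH_span (a *: x + y).
Proof.
move=> [s ->] [r ->]; exists ([seq (t.1, a * t.2) | t <- s] ++ r).
by rewrite big_cat big_map scaler_sumr; congr (_ + _); apply: eq_bigr => t _; rewrite scalerA.
Qed.

Lemma FH_span_mono i j : FH_span (F ^+ i * H ^+ j).
Proof. by exists [:: (i, j, 1)]; rewrite big_seq1 scale1r. Qed.

Lemma FH_span_mulF x : FH_span x -> FH_span (F * x).
Proof.
move=> [s ->]; elim: s => [|t s IHs]; first by rewrite big_nil mulr0; apply: FH_span0.
rewrite big_cons mulrDr -scalerAr mulrA -exprS.
by apply: FH_span_lin => //; apply: FH_span_mono.
Qed.

Lemma FH_span_mulH x : FH_span x -> FH_span (H * x).
Proof.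
have wF : H * F - F * H = -1 *: F by rewrite scaleN1r.
move=> [s ->]; elim: s => [|[[i j] a] s IHs]; first by rewrite big_nil mulr0; apply: FH_span0.
have HFH : H * (F ^+ i * H ^+ j) = (-1 *+ i) *: (F ^+ i * H ^+ j) + F ^+ i * H ^+ j.+1.
  rewrite mulrA -(subrK (F ^+ i * H) (H * F ^+ i)) (ad_weightX i wF) mulrDl -scalerAl.
  by rewrite -mulrA -exprS.
rewrite big_cons mulrDr -scalerAr /= HFH scalerDr scalerA -addrA.
by apply: FH_span_lin; [apply: FH_span_mono | apply: FH_span_lin => //; apply: FH_span_mono].
Qed.

Lemma RFH_FH_span x : RFH F H x -> FH_span x.
Proof.
pose S x := forall y, FH_span y -> FH_span (x * y).
have S_closed : Defs.subalg_closed S.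
  split=> [y|x1 x2 S1 S2 y Fy|x1 x2 S1 S2 y Fy|a x1 S1 y Fy]; first by rewrite mul1r.
  - by rewrite mulrDl -[_ * y]scale1r; apply: FH_span_lin; [apply: S1 | apply: S2].
  - by rewrite -mulrA; apply: S1; apply: S2.
  - by rewrite -scalerAl -[_ *: _]addr0; apply: FH_span_lin; [apply: S1 | apply: FH_span0].
move=> /(_ S S_closed FH_span_mulF FH_span_mulH 1).
by rewrite mulr1; apply; have := FH_span_mono 0 0; rewrite !expr0 mulr1.
Qed.

End FHSpan.

Section RFHClosure.
Variables (A : algType C) (F H : A).

Lemma RFH_subalg_closed : Defs.subalg_closed (RFH F H).
Proof.
split=> [S [] //|x y Rx Ry S SC SF SH|x y Rx Ry S SC SF SH|a x Rx S SC SF SH];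
  case: (SC) => _ SD SM SZ; [apply: SD | apply: SM | apply: SZ]; by [apply: Rx | apply: Ry].
Qed.

Lemma RFHB x y : RFH F H x -> RFH F H y -> RFH F H (x - y).
Proof.
have [_ RD _ RZ] := RFH_subalg_closed.
by move=> Rx Ry; apply: RD => //; rewrite -scaleN1r; apply: RZ.
Qed.

Lemma RFHX x n : RFH F H x -> RFH F H (x ^+ n).
Proof.
have [R1 _ RM _] := RFH_subalg_closed.
by move=> Rx; elim: n => [|n IHn]; rewrite ?expr0 // exprS; apply: RM.
Qed.

End RFHClosure.

Section PBWCoefficients.
Variables (A : algType C) (E F H : A).
Hypothesis HE : H * E - E * H = E.
Hypothesis HF : H * F - F * H = - F.
Hypothesis pbw : PBW_basis E F H.

Local Notation mono := (mono E F H).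
Implicit Types (x y w : A) (a b : nat -> nat -> nat -> C).

Lemma ad_H_mono i j k : H * mono i j k - mono i j k * H = (k%:R - i%:R) *: mono i j k.
Proof.
have wF : H * F - F * H = -1 *: F by rewrite scaleN1r.
have wH : H * H - H * H = 0 *: H by rewrite subrr scale0r.
have wE : H * E - E * H = 1 *: E by rewrite scale1r.
rewrite /mono (ad_weightM (ad_weightM (ad_weightX i wF) (ad_weightX j wH)) (ad_weightX k wE)).
by rewrite mulNrn mul0rn addr0 addrC.
Qed.

Definition pbw_sum n b : A :=
  \sum_(0 <= i < n) \sum_(0 <= j < n) \sum_(0 <= k < n) b i j k *: mono i j k.

Definition pbw_coefs x b := exists n,
  (forall i j k, [|| n <= i, n <= j | n <= k]%N -> b i j k = 0) /\ x = pbw_sum n b.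

Lemma pbw_sum_widen n m b :
  (forall i j k, [|| n <= i, n <= j | n <= k]%N -> b i j k = 0) ->
  (n <= m)%N -> pbw_sum m b = pbw_sum n b.
Proof.
move=> b0 le_nm; rewrite /pbw_sum (big_nat_widen0 le_nm) => [|i ni]; last first.
  by apply: big1 => j _; apply: big1 => k _; rewrite b0 ?scale0r ?ni.
apply: eq_bigr => i _; rewrite (big_nat_widen0 le_nm) => [|j nj]; last first.
  by apply: big1 => k _; rewrite b0 ?scale0r ?nj ?orbT.
apply: eq_bigr => j _; rewrite (big_nat_widen0 le_nm) // => k nk.
by rewrite b0 ?scale0r ?nk ?orbT.
Qed.

Lemma pbw_coefs_lin x y a b (s : C) : pbw_coefs x a -> pbw_coefs y b ->
  pbw_coefs (s *: x + y) (fun i j k => s * a i j k + b i j k).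
Proof.
move=> [n [a0 ->]] [m [b0 ->]]; exists (maxn n m); split=> [i j k ij_big|].
  rewrite a0 ?b0 ?mulr0 ?addr0 //; move: ij_big; rewrite !geq_max; lia.
rewrite -(pbw_sum_widen a0 (leq_maxl n m)) -(pbw_sum_widen b0 (leq_maxr n m)).
rewrite /pbw_sum scaler_sumr -big_split; apply: eq_bigr => i _.
rewrite scaler_sumr -big_split; apply: eq_bigr => j _.
rewrite scaler_sumr -big_split; apply: eq_bigr => k _.
by rewrite scalerDl scalerA.
Qed.

Lemma pbw_coefs_exists x : exists b, pbw_coefs x b.
Proof.
have [span _] := pbw; have [[|n] [c ->]] := span x.
  by exists (fun _ _ _ => 0), 0%N; rewrite big_ord0 /pbw_sum big_geq.
pose b i j k := if [&& i <= n, j <= n & k <= n]%N then c (inord i) (inord j) (inord k) else 0.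
exists b, n.+1; split=> [i j k|].
  by rewrite /b; case: ifP => // /and3P[ni nj nk]; rewrite !ltnNge ni nj nk.
rewrite /pbw_sum big_mkord; apply: eq_bigr => i _; rewrite big_mkord; apply: eq_bigr => j _.
by rewrite big_mkord; apply: eq_bigr => k _; rewrite /b !leq_ord !inord_val.
Qed.

Lemma pbw_coefs0 : pbw_coefs 0 (fun _ _ _ => 0).
Proof. by exists 0%N; split; rewrite // /pbw_sum big_geq. Qed.

Lemma pbw_coefs_eq0 x b : pbw_coefs x b -> (forall i j k, b i j k = 0) -> x = 0.
Proof.
move=> [n [_ ->]] b0; apply: big1 => i _; apply: big1 => j _; apply: big1 => k _.
by rewrite b0 scale0r.
Qed.

Lemma pbw_coefs0_eq0 b : pbw_coefs 0 b -> forall i j k, b i j k = 0.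
Proof.
have [_ indep] := pbw; move=> [n [b0 sum0]] i j k.
have [/and3P[ni nj nk]|] := boolP [&& i < n, j < n & k < n]%N; last first.
  by rewrite !negb_and -!leqNgt => /b0.
apply: (indep n (fun i j k : 'I_n => b i j k) _ (Ordinal ni) (Ordinal nj) (Ordinal nk)).
rewrite [RHS]sum0 /pbw_sum big_mkord; apply: eq_bigr => i' _; rewrite big_mkord.
by apply: eq_bigr => j' _; rewrite big_mkord.
Qed.

Lemma pbw_coefs_unique x a b :
  pbw_coefs x a -> pbw_coefs x b -> forall i j k, a i j k = b i j k.
Proof.
move=> xa xb i j k; have := pbw_coefs_lin (-1) xa xb.
rewrite scaleN1r addNr => /pbw_coefs0_eq0/(_ i j k)/eqP.
by rewrite mulN1r addrC subr_eq0 eq_sym => /eqP.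
Qed.

Lemma pbw_coefs_mulE x b : pbw_coefs x b ->
  pbw_coefs (x * E) (fun i j k => if k is k'.+1 then b i j k' else 0).
Proof.
move=> [n [b0 ->]]; exists n.+1; split=> [i j [|k] big //|]; first by apply: b0; lia.
rewrite -(pbw_sum_widen b0 (leqnSn n)) /pbw_sum mulr_suml; apply: eq_bigr => i _.
rewrite mulr_suml; apply: eq_bigr => j _.
rewrite mulr_suml [LHS]big_nat_recr // [RHS]big_nat_recl //= scale0r add0r.
rewrite b0 ?leqnn ?orbT // scale0r mul0r addr0.
by apply: eq_bigr => k _; rewrite -scalerAl /mono exprSr mulrA.
Qed.

Lemma pbw_coefs_adH x b : pbw_coefs x b ->
  pbw_coefs (H * x - x * H) (fun i j k => (k%:R - i%:R) * b i j k).
Proof.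
move=> [n [b0 ->]]; exists n; split=> [i j k /b0 -> |]; first by rewrite mulr0.
rewrite /pbw_sum mulr_sumr mulr_suml -sumrB; apply: eq_bigr => i _.
rewrite mulr_sumr mulr_suml -sumrB; apply: eq_bigr => j _.
rewrite mulr_sumr mulr_suml -sumrB; apply: eq_bigr => k _.
by rewrite -scalerAr -scalerAl -scalerBr ad_H_mono scalerA mulrC.
Qed.

Lemma pbw_coefs_mono i0 j0 k0 :
  pbw_coefs (mono i0 j0 k0) (fun i j k => ((i == i0) && (j == j0) && (k == k0))%:R).
Proof.
pose n := (maxn i0 (maxn j0 k0)).+1.
have [i0n j0n k0n] : [/\ i0 < n, j0 < n & k0 < n]%N by rewrite !ltnS !leq_max !leqnn !orbT.
have big_nat_single (G : nat -> A) m : (m < n)%N -> (forall i, i != m -> G i = 0) ->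
    \sum_(0 <= i < n) G i = G m.
  move=> mn G0; rewrite (bigD1_seq m) ?mem_index_iota ?iota_uniq //=.
  by rewrite big1 ?addr0 // => i /G0.
exists n; split=> [i j k big|].
  apply/eqP; rewrite pnatr_eq0 eqb0; apply: contraL big => /andP[/andP[/eqP-> /eqP->] /eqP->].
  by rewrite !negb_or -!ltnNge i0n j0n k0n.
rewrite /pbw_sum (big_nat_single _ i0) // => [|i /negbTE ne]; last first.
  by apply: big1 => j _; apply: big1 => k _; rewrite ne scale0r.
rewrite (big_nat_single _ j0) // => [|j /negbTE ne]; last first.
  by apply: big1 => k _; rewrite ne andbF scale0r.
rewrite (big_nat_single _ k0) // => [|k /negbTE ne];
  by rewrite !eqxx ?ne ?andbF ?scale1r ?scale0r.
Qed.

Lemma FH_span_coefs x : FH_span F H x ->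
  exists2 b, pbw_coefs x b & forall i j k, k != 0%N -> b i j k = 0.
Proof.
move=> [s ->]; elim: s => [|t s [b sb b_supp]].
  by exists (fun _ _ _ => 0); rewrite ?big_nil //; apply: pbw_coefs0.
have := pbw_coefs_lin t.2 (pbw_coefs_mono t.1.1 t.1.2 0) sb.
rewrite /mono expr0 mulr1 big_cons => tsb; eexists; first exact: tsb.
move=> i j k k_neq0 /=; rewrite (negbTE k_neq0) andbF mulr0 add0r; exact: b_supp.
Qed.

End PBWCoefficients.

Section Projection.
Variables (A : algType C) (E F H : A) (c : C).
Hypothesis HE : H * E - E * H = E.
Hypothesis HF : H * F - F * H = - F.
Hypothesis pbw : PBW_basis E F H.

Local Notation proj := (proj_eta E F H c).
Local Notation lidealE := (lideal (E - c%:A)).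
Implicit Types (u v w x z : A).

Lemma decomposition u : exists2 v, RFH F H v & lidealE (u - v).
Proof.
have [R1 RD RM RZ] := RFH_subalg_closed F H.
pose D u := exists2 v, RFH F H v & lidealE (u - v).
have D0 : D 0 by exists 0; [rewrite -(scale0r 1); exact: RZ | rewrite subrr; apply: lideal0].
have DD x y : D x -> D y -> D (x + y).
  move=> [v Rv xv] [w Rw yw]; exists (v + w); first exact: RD.
  by rewrite opprD addrACA; apply: lidealD.
have Dmono s i j k : D (s *: mono E F H i j k).
  exists (s *: (c ^+ k *: (F ^+ i * H ^+ j))).
    by apply: (RZ s); apply: (RZ (c ^+ k)); apply: RM; apply: RFHX => S _ SF SH.
  rewrite -scalerBr; apply: lidealZ; rewrite /mono -[c ^+ k *: _]mulr_algr -mulrBr.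
  by apply: lidealMl; apply: lideal_expr_sub.
have [span _] := pbw; have [n [b ->]] := span u.
apply: (big_ind D) => // i _; apply: (big_ind D) => // j _; exact: (big_ind D).
Qed.

Lemma lideal_pbw_coefs_eq0 (d : nat -> nat) x b :
  (forall i, c ^+ d i != 0) -> lidealE x -> pbw_coefs E F H x b ->
  (forall i j k, k != d i -> b i j k = 0) -> x = 0.
Proof.
move=> cd_neq0 [w ->] xb b_supp; have [a wa] := pbw_coefs_exists pbw w.
have wEc : pbw_coefs E F H (w * (E - c%:A))
    (fun i j k => - c * a i j k + (if k is k'.+1 then a i j k' else 0)).
  by rewrite mulrBr mulr_algr addrC -scaleNr; apply: pbw_coefs_lin (pbw_coefs_mulE wa).
suff -> : w = 0 by rewrite mul0r.
apply: (pbw_coefs_eq0 wa) => i j k; have [n [a0 _]] := wa.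
pose p := \poly_(l < n) a i j l.
have pE l : p`_l = a i j l.
  by rewrite coef_poly; case: ltnP => // nl; rewrite a0 // nl !orbT.
suff /(mulXsubC_eq_monomial_eq0 (cd_neq0 i)) : p * ('X - c%:P) = b i j (d i) *: 'X^(d i).
  by rewrite -pE => ->; rewrite coef0.
apply/polyP => l; rewrite coefZ coefXn.
have -> : b i j (d i) * (l == d i)%:R = b i j l.
  by case: eqVneq => [->|/b_supp ->]; rewrite ?mulr1 ?mulr0.
rewrite -(pbw_coefs_unique pbw wEc xb) mulrBr coefB coefMX coefMC.
by case: l => [|l] /=; rewrite !pE mulrC mulNr addrC // add0r.
Qed.

Lemma RFH_lideal_eq0 v : RFH F H v -> lidealE v -> v = 0.
Proof.
move=> /(RFH_FH_span HF)/(FH_span_coefs E)[b vb b_supp] Iv.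
apply: (lideal_pbw_coefs_eq0 (d := fun _ => 0%N) _ Iv vb b_supp) => i.
by rewrite expr0 oner_neq0.
Qed.

Lemma commH_lideal_eq0 z : c != 0 -> z * H = H * z -> lidealE z -> z = 0.
Proof.
move=> c_neq0 zH Iz; have [b zb] := pbw_coefs_exists pbw z.
have := pbw_coefs_adH HE HF zb; rewrite zH subrr => /(pbw_coefs0_eq0 pbw) adz0.
apply: (lideal_pbw_coefs_eq0 (d := fun i => i) _ Iz zb) => [i|i j k k_neq_i].
  exact: expf_neq0.
by have /eqP := adz0 i j k; rewrite mulf_eq0 subr_eq0 eqr_nat (negbTE k_neq_i) => /eqP.
Qed.

Lemma proj_etaP u : RFH F H (proj u) /\ lidealE (u - proj u).
Proof.
have [v Rv uv] := decomposition u.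
have [] := epsilon_spec (inhabits 0) (fun v => RFH F H v /\ R_RE_eta E c (u - v)).
  by exists v; split; last apply/R_RE_etaE.
by move=> ? /R_RE_etaE.
Qed.

Lemma proj_eta_eq u v : RFH F H v -> lidealE (u - v) -> proj u = v.
Proof.
move=> Rv uv; have [Rp up] := proj_etaP u.
apply/eqP; rewrite -subr_eq0; apply/eqP; apply: RFH_lideal_eq0; first exact: RFHB.
by have := lidealB uv up; rewrite opprB [_ + (_ - u)]addrC subrKA.
Qed.

Lemma proj_eta1 : proj 1 = 1.
Proof.
apply: proj_eta_eq; first by case: (RFH_subalg_closed F H).
by rewrite subrr; apply: lideal0.
Qed.

Lemma proj_etaD u w : proj (u + w) = proj u + proj w.
Proof.
have [Ru uu] := proj_etaP u; have [Rw ww] := proj_etaP w.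
apply: proj_eta_eq; first by case: (RFH_subalg_closed F H) => _ RD _ _; apply: RD.
by rewrite opprD addrACA; apply: lidealD.
Qed.

Lemma proj_etaZ (a : C) u : proj (a *: u) = a *: proj u.
Proof.
have [Ru uu] := proj_etaP u.
apply: proj_eta_eq; first by case: (RFH_subalg_closed F H) => _ _ _ RZ; apply: RZ.
by rewrite -scalerBr; apply: lidealZ.
Qed.

Lemma proj_etaM u w : central w -> proj (u * w) = proj u * proj w.
Proof.
move=> w_central; have [Ru uu] := proj_etaP u; have [Rw ww] := proj_etaP w.
apply: proj_eta_eq; first by case: (RFH_subalg_closed F H) => _ _ RM _; apply: RM.
have -> : u * w - proj u * proj w = w * (u - proj u) + proj u * (w - proj w).
  by rewrite !mulrBr (w_central (proj u)) addrA subrK w_central.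
by apply: lidealD; apply: lidealMl.
Qed.

Lemma proj_eta_inj z w : c != 0 -> z * H = H * z -> w * H = H * w ->
  proj z = proj w -> z = w.
Proof.
move=> c_neq0 zH wH pzw; apply/eqP; rewrite -subr_eq0; apply/eqP.
apply: commH_lideal_eq0 => //; first by rewrite mulrBr mulrBl zH wH.
have [_ zz] := proj_etaP z; have [_ ww] := proj_etaP w.
by have := lidealB zz ww; rewrite pzw opprB addrA subrK.
Qed.

End Projection.

Theorem mainTheorem15 (f : {poly C}) (A : algType C) (E F H : A) (c : C) :
  Rf_relations E F H f -> PBW_basis E F H -> c != 0 ->
  [/\ proj_eta E F H c 1 = 1,
      forall z w, central z -> central w ->
        proj_eta E F H c (z + w) = proj_eta E F H c z + proj_eta E F H c w,
      forall (a : C) z, central z ->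
        proj_eta E F H c (a *: z) = a *: proj_eta E F H c z,
      forall z w, central z -> central w ->
        proj_eta E F H c (z * w) = proj_eta E F H c z * proj_eta E F H c w
    & forall z w, central z -> central w ->
        proj_eta E F H c z = proj_eta E F H c w -> z = w].
Proof.
move=> [_ HE HF] pbw c_neq0; split.
- exact: proj_eta1.
- by move=> z w _ _; apply: proj_etaD.
- by move=> a z _; apply: proj_etaZ.
- by move=> z w _ /proj_etaM; apply.
- by move=> z w Zz Zw; apply: proj_eta_inj.
Qed.
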